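(* Let $k\in\mathbb{N}_0$. Then: (a) the set of $v\in\widetilde V$ with $\rho_k(v)=k+4$ is exactly $\{\langle1\rangle^{k+4},\ \langle2\rangle^{k+3},\ (\langle3\rangle^{k+2},1),\ (\langle5\rangle^{k+1},2,1)\}$; (b) the set of minimal elements of $\{v\in\widetilde V:\rho_k(v)>k+4\}$ is exactly $\{\langle1\rangle^{k+5},\ (2,\langle1\rangle^{k+3}),\ (3,\langle2\rangle^{k+2}),\ (4,\langle3\rangle^{k+1},1),\ (6,\langle5\rangle^{k},2,1)\}$; (c) consequently, for every $w\in\widetilde V$ with $\rho_k(w)>k+4$ there exists $v\in\widetilde V$ with $v<w$ and $\rho_k(v)=k+4$.
   Context: For $k\in\mathbb{N}_0$ put $t=k+2$, $u_0=0$, $u_1=1$, $u_{i+2}=tu_{i+1}-u_i$; $\rho_k(0)=0$ and $\rho_k(n)=1+\frac{u_{n-1}}{u_n+1}$ for $n\in\mathbb{N}$. $\widetilde V$ is the set of infinite nonincreasing sequences of nonnegative integers that are eventually $0$ (written by listing nonzero entries), with componentwise order $\le$; $v<w$ means $v\le w$, $v\ne w$. $\rho_k(v)=\sum_i\rho_k(v_i)$. $\langle s\rangle^r$ denotes $s$ repeated $r$ times (omitted if $r=0$). *)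

From mathcomp Require Import all_boot all_order all_algebra.
Set Implicit Arguments. Unset Strict Implicit. Unset Printing Implicit Defensive.
Import Order.TTheory GRing.Theory Num.Theory.
Local Open Scope ring_scope.

Fixpoint upair (k i : nat) : int * int :=
  match i with
  | 0%N => (0, 1)
  | i'.+1 => let p := upair k i' in (p.2, (k.+2)%:Z * p.2 - p.1)
  end.

Definition u (k i : nat) : int := (upair k i).1.

Definition rho (k n : nat) : rat :=
  if n is n'.+1 then 1 + (u k n')%:~R / ((u k n)%:~R + 1) else 0.

(* An element of \widetilde V is represented by the list of its nonzero
   entries: a nonincreasing list of positive naturals.  The infinite
   sequence is i |-> nth 0 v i. *)
Definition inV (v : seq nat) : bool := sorted geq v && all (fun x => 0 < x)%N v.

Definition vle (v w : seq nat) : Prop := forall i, (nth 0 v i <= nth 0 w i)%N.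
Definition vlt (v w : seq nat) : Prop := vle v w /\ v <> w.

Definition rhov (k : nat) (v : seq nat) : rat := \sum_(x <- v) rho k x.

From mathcomp Require Import all_boot all_order all_algebra.
From mathcomp Require Import ring lra zify.
Set Implicit Arguments. Unset Strict Implicit. Unset Printing Implicit Defensive.
Import Order.TTheory GRing.Theory Num.Theory.
Local Open Scope ring_scope.

(* Write t = k + 2 and w_n = u_{n+1} - u_n.  Cassini's identity shows that
   rho_k is strictly increasing and that its increments
   rho_k(n+1) - rho_k(n) = (1 + w_{n-1}) / ((u_n + 1)(u_{n+1} + 1)) decrease,
   and the ratios u_n / u_{n+1} are bounded by an explicit rational c, so that
   rho_k < 1 + c.  Sorting v by its length and its last few entries, these
   bounds show that v either has rho_k(v) < k + 4, or is one of the four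
   vectors of value k + 4, or dominates one of the five vectors of (b).  Each
   of those arises from a vector of value k + 4 (for <1>^(k+5), from
   (0, <1>^(k+4))) by raising its first entry a to a + 1, and all its entries
   are at most a + 1; as the increments of rho_k decrease, lowering any entry
   loses at least rho_k(a + 1) - rho_k(a), which gives minimality. *)

Section Rho.
Variable k : nat.
Local Notation x := (k%:R : rat).

Lemma x_ge0 : 0 <= x. Proof. exact: ler0n. Qed.

Definition U n : rat := (u k n)%:~R.
Definition W n : rat := U n.+1 - U n.

Lemma U0 : U 0 = 0. Proof. by []. Qed.
Lemma U1 : U 1 = 1. Proof. by []. Qed.

Lemma U_rec n : U n.+2 = (x + 2) * U n.+1 - U n.
Proof. by rewrite /U /u /= rmorphB rmorphM /= -addn2 -pmulrn natrD. Qed.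

Lemma W_rec n : W n.+1 = W n + x * U n.+1.
Proof. by rewrite /W U_rec; ring. Qed.

Lemma U_ge0_W_ge1 n : 0 <= U n /\ 1 <= W n.
Proof.
elim: n => [|n [U_ge0 W_ge1]]; first by rewrite /W U0 U1; lra.
have U_ge0' : 0 <= U n.+1 by move: W_ge1; rewrite /W; lra.
by rewrite W_rec; split=> //; have := mulr_ge0 x_ge0 U_ge0'; lra.
Qed.

Lemma U_ge0 n : 0 <= U n. Proof. exact: (U_ge0_W_ge1 n).1. Qed.
Lemma W_ge1 n : 1 <= W n. Proof. exact: (U_ge0_W_ge1 n).2. Qed.

Lemma cassini n : U n.+1 ^+ 2 - U n * U n.+2 = 1.
Proof.
elim: n => [|n IHn]; first by rewrite U0 U1; ring.
by rewrite -[RHS]IHn !U_rec; ring.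
Qed.

Lemma W_sqr n : W n ^+ 2 = 1 + x * U n * U n.+1.
Proof. by rewrite -[X in _ = X + _](cassini n) /W U_rec; ring. Qed.

Lemma rhoS n : rho k n.+1 = 1 + U n / (U n.+1 + 1). Proof. by []. Qed.
Lemma rho0 : rho k 0 = 0. Proof. by []. Qed.
Lemma rho1 : rho k 1 = 1. Proof. by rewrite rhoS U0 mul0r addr0. Qed.

Definition rho_step n := rho k n.+1 - rho k n.

Lemma rho_step0 : rho_step 0 = 1.
Proof. by rewrite /rho_step rho1 rho0 subr0. Qed.

Lemma rho_stepS n : rho_step n.+1 = (1 + W n) / ((U n.+1 + 1) * (U n.+2 + 1)).
Proof.
have := U_ge0 n.+1; have := U_ge0 n.+2 => U2_ge0 U1_ge0.
rewrite /rho_step !rhoS -[X in _ = (X + _) / _](cassini n) /W.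
by field; rewrite !lt0r_neq0 //; lra.
Qed.

Lemma rho_step_gt0 n : 0 < rho_step n.
Proof.
case: n => [|n]; first by rewrite rho_step0.
have := U_ge0 n.+1; have := U_ge0 n.+2; have := W_ge1 n => W_ge1 U2_ge0 U1_ge0.
by rewrite rho_stepS divr_gt0 // ?mulr_gt0; lra.
Qed.

Lemma rho_step_cross n : (1 + W n.+1) * (U n.+1 + 1) <= (1 + W n) * (U n.+3 + 1).
Proof.
have U_succ m : U m.+1 = U m + W m by rewrite /W; ring.
have sq := W_sqr n.
rewrite !U_succ !W_rec !U_succ !W_rec !U_succ in sq *.
(* In terms of a = U n and p = W n, [sq] reads p ^ 2 = 1 + x a (a + p): it
   cancels the only negative term of the difference. *)
have a_ge0 := U_ge0 n; have p_ge1 := W_ge1 n.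
have xa := mulr_ge0 x_ge0 a_ge0.
have xp : 0 <= x * W n by apply: mulr_ge0 x_ge0 _; lra.
have xap : 0 <= x * U n * W n by apply: mulr_ge0 xa _; lra.
nra.
Qed.

Lemma rho_step_succ_le n : rho_step n.+1 <= rho_step n.
Proof.
case: n => [|n].
  rewrite rho_stepS rho_step0 /W !U_rec U1 U0 ler_pdivrMr ?mul1r; have := x_ge0; lra.
have := U_ge0 n.+1; have := U_ge0 n.+2; have := U_ge0 n.+3 => U3_ge0 U2_ge0 U1_ge0.
rewrite -subr_ge0.
have -> : rho_step n.+1 - rho_step n.+2 =
    ((1 + W n) * (U n.+3 + 1) - (1 + W n.+1) * (U n.+1 + 1)) /
    ((U n.+1 + 1) * (U n.+2 + 1) * (U n.+3 + 1)).
  by rewrite !rho_stepS; field; rewrite !lt0r_neq0 //; lra.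
by rewrite divr_ge0 ?subr_ge0 ?rho_step_cross // !mulr_ge0 //; lra.
Qed.

Lemma rho_step_antitone m n : (m <= n)%N -> rho_step n <= rho_step m.
Proof.
apply: (@homo_leq _ rho_step (fun a b => b <= a)) => [a|b a d le_ab le_db|i].
- exact: lexx.
- exact: le_trans le_db le_ab.
- exact: rho_step_succ_le.
Qed.

Lemma rho_mono m n : (m <= n)%N -> rho k m <= rho k n.
Proof.
apply: (@homo_leq _ (rho k) (fun a b => a <= b)) => [a|b a d|i].
- exact: lexx.
- exact: le_trans.
- by rewrite -subr_ge0 ltW ?rho_step_gt0.
Qed.

Local Ltac poly_pos :=
  have := x_ge0; have := exprn_ge0 2 x_ge0; have := exprn_ge0 3 x_ge0;
  have := exprn_ge0 4 x_ge0; lra.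

Lemma U2 : U 2 = x + 2. Proof. by rewrite U_rec U1 U0; ring. Qed.
Lemma U3 : U 3 = (x + 1) * (x + 3). Proof. by rewrite U_rec U2 U1; ring. Qed.
Lemma U4 : U 4 = (x + 2) * (x ^+ 2 + 4 * x + 2). Proof. by rewrite U_rec U3 U2; ring. Qed.
Lemma U5 : U 5 = (x + 1) * (x + 3) * (x ^+ 2 + 4 * x + 2) - 1.
Proof. by rewrite U_rec U4 U3; ring. Qed.

Lemma rho2E : rho k 2 = 1 + 1 / (x + 3).
Proof. by rewrite rhoS U2 U1; congr (_ + _); field; rewrite !lt0r_neq0 //; poly_pos. Qed.
Lemma rho3E : rho k 3 = 1 + 1 / (x + 2).
Proof. by rewrite rhoS U3 U2; congr (_ + _); field; rewrite !lt0r_neq0 //; poly_pos. Qed.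
Lemma rho4E : rho k 4 = 1 + (x + 3) / (x ^+ 2 + 5 * x + 5).
Proof. by rewrite rhoS U4 U3; congr (_ + _); field; rewrite !lt0r_neq0 //; poly_pos. Qed.
Lemma rho5E : rho k 5 = 1 + (x + 2) / ((x + 1) * (x + 3)).
Proof. by rewrite rhoS U5 U4; congr (_ + _); field; rewrite !lt0r_neq0 //; poly_pos. Qed.

(* The ratio w_2 / w_3.  The w_n satisfy the recurrence of u with
   w_{n+1}^2 - w_n w_{n+2} = 2 - t <= 0, so w_n / w_{n+1} decreases to the
   limit of u_n / u_{n+1}; n = 2 is the first index for which
   [rho_tail_bound] holds for every k. *)
Definition ratio_ub : rat := (x ^+ 2 + 3 * x + 1) / (x ^+ 3 + 5 * x ^+ 2 + 6 * x + 1).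

Lemma ratio_ub_gt0 : 0 < ratio_ub. Proof. by rewrite divr_gt0 //; poly_pos. Qed.

Lemma ratio_ub_quadratic : 1 <= ratio_ub * (x + 2 - ratio_ub).
Proof.
rewrite -subr_ge0.
have -> : ratio_ub * (x + 2 - ratio_ub) - 1 = x / (x ^+ 3 + 5 * x ^+ 2 + 6 * x + 1) ^+ 2.
  by rewrite /ratio_ub; field; rewrite lt0r_neq0 //; poly_pos.
by rewrite divr_ge0 ?x_ge0 ?exprn_ge0 //; poly_pos.
Qed.

Lemma ratio_ub_le : (x + 1) * ratio_ub <= 1.
Proof.
rewrite -subr_ge0.
have -> : 1 - (x + 1) * ratio_ub = x * (x + 2) / (x ^+ 3 + 5 * x ^+ 2 + 6 * x + 1).
  by rewrite /ratio_ub; field; rewrite lt0r_neq0 //; poly_pos.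
by rewrite divr_ge0 ?mulr_ge0 //; poly_pos.
Qed.

Lemma U_le_ratio_ub n : U n <= ratio_ub * U n.+1.
Proof.
have r_gt0 := ratio_ub_gt0; have r_quad := ratio_ub_quadratic.
elim: n => [|n IHn]; first by rewrite U0 U1 mulr1 ltW.
by have := U_ge0 n; have := U_ge0 n.+1; rewrite U_rec; nra.
Qed.

Lemma rho_lt n : rho k n < 1 + ratio_ub.
Proof.
have r_gt0 := ratio_ub_gt0; case: n => [|n]; first by rewrite rho0; lra.
rewrite rhoS ltrD2l ltr_pdivrMr; last by have := U_ge0 n.+1; lra.
by have := U_le_ratio_ub n; lra.
Qed.

Lemma rho_tail_bound : x * (1 + ratio_ub) + rho k 4 + rho k 2 + 1 < x + 4.
Proof.
rewrite -subr_gt0 rho4E rho2E.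
have -> : x + 4 - (x * (1 + ratio_ub) + (1 + (x + 3) / (x ^+ 2 + 5 * x + 5)) +
      (1 + 1 / (x + 3)) + 1) =
    1 / ((x ^+ 3 + 5 * x ^+ 2 + 6 * x + 1) * (x ^+ 2 + 5 * x + 5) * (x + 3)).
  by rewrite /ratio_ub; field; rewrite !lt0r_neq0 //; poly_pos.
by rewrite divr_gt0 // !mulr_gt0 //; poly_pos.
Qed.

End Rho.

Lemma vle_refl v : vle v v.
Proof. by []. Qed.

Lemma vle_trans u v w : vle u v -> vle v w -> vle u w.
Proof. by move=> le_uv le_vw i; exact: leq_trans (le_uv i) (le_vw i). Qed.

Lemma vle_cons a b s t : (a <= b)%N -> vle s t -> vle (a :: s) (b :: t).
Proof. by move=> le_ab le_st [|i] /=; [exact: le_ab | exact: le_st]. Qed.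

Lemma vle_catr p q t : size p = size q -> vle p q -> vle (p ++ t) (q ++ t).
Proof. by move=> eq_size le_pq i; rewrite !nth_cat eq_size; case: ifP. Qed.

Lemma vle_nseq a m s : (m <= size s)%N -> all (leq a) s -> vle (nseq m a) s.
Proof.
move=> m_le /allP a_le i; rewrite nth_nseq; case: ifP => // lt_im.
by apply/a_le/mem_nth/(leq_trans lt_im).
Qed.

Lemma nth_gt0 i (s : seq nat) :
  all (fun y => 0 < y)%N s -> (0 < nth 0 s i)%N = (i < size s)%N.
Proof.
move=> /allP s_pos; case: (ltnP i (size s)) => [lt_is|le_si]; last by rewrite nth_default.
exact/s_pos/mem_nth.
Qed.

Lemma eq_from_nth_gt0 w v : all (fun y => 0 < y)%N w -> all (fun y => 0 < y)%N v ->
  (forall i, nth 0 w i = nth 0 v i) -> w = v.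
Proof.
move=> w_pos v_pos eq_nth.
have lt_size i : (i < size w)%N = (i < size v)%N.
  by rewrite -(nth_gt0 i w_pos) -(nth_gt0 i v_pos) eq_nth.
have eq_size : size w = size v.
  apply/eqP; rewrite eqn_leq.
  by rewrite [(size w <= _)%N]leqNgt lt_size ltnn [(size v <= _)%N]leqNgt -lt_size ltnn.
by apply: (eq_from_nth (x0 := 0%N)) => // i _; exact: eq_nth.
Qed.

Lemma vlt_nth w v : all (fun y => 0 < y)%N w -> all (fun y => 0 < y)%N v -> vlt w v ->
  exists2 j, (j < size v)%N & (nth 0 w j < nth 0 v j)%N.
Proof.
move=> w_pos v_pos [le_wv neq_wv].
case: (pickP (fun j : 'I_(size v) => nth 0 w j < nth 0 v j)%N) => [j lt_j|ge_j].
  by exists j.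
case: neq_wv; apply: eq_from_nth_gt0 => // i.
apply/eqP; rewrite eqn_leq le_wv /=; case: (ltnP i (size v)) => [lt_iv|le_vi].
  by have := ge_j (Ordinal lt_iv); rewrite /= ltnNge => /negbFE.
by rewrite [nth 0 v i]nth_default.
Qed.

Lemma sorted_rcons_geq (s : seq nat) y : sorted geq (rcons s y) -> all (leq y) (rcons s y).
Proof.
move=> srt; have : sorted leq (rev (rcons s y)) by rewrite rev_sorted.
rewrite rev_rcons /= (path_sortedE leq_trans) all_rev => /andP[y_le _].
by rewrite all_rcons leqnn.
Qed.

Lemma flat_or_bump a n p tl : sorted geq (p ++ tl) -> all (leq a) p -> size p = n.+1 ->
  p ++ tl = nseq n.+1 a ++ tl \/ vle (a.+1 :: nseq n a ++ tl) (p ++ tl).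
Proof.
case: p => // y q; rewrite /= (path_sortedE (rev_trans leq_trans)) all_cat.
move=> /andP[/andP[/allP q_le_y _] _] /andP[a_le_y a_le_q] [<-].
have [y_le_a|a_lt_y] := leqP y a.
- left; have y_a : y = a by apply/eqP; rewrite eqn_leq y_le_a.
  congr (_ :: _ ++ _) => //; apply/all_pred1P/allP => z z_q.
  by rewrite /= eqn_leq (allP a_le_q) // andbT -{1}y_a; apply: q_le_y.
- right; apply: vle_cons => //.
  by apply: vle_catr; [rewrite size_nseq | exact: vle_nseq].
Qed.

Lemma path_geq_nseq b a n s : (a <= b)%N -> path geq a s -> path geq b (nseq n a ++ s).
Proof.
elim: n b => [|n IHn] b le_ab /= a_s; last by rewrite le_ab IHn.
by case: s a_s => //= y s /andP[le_ya ->]; rewrite andbT (leq_trans le_ya).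
Qed.

Lemma inV_block b a n s : (0 < a <= b)%N -> path geq a s -> all (fun y => 0 < y)%N s ->
  inV (b :: nseq n a ++ s).
Proof.
move=> /andP[a_gt0 le_ab] a_s s_pos.
by rewrite /inV /= path_geq_nseq //= all_cat all_nseq a_gt0 orbT s_pos (leq_trans a_gt0).
Qed.

Section Classification.
Variable k : nat.
Local Notation x := (k%:R : rat).

Lemma rhov_cons a s : rhov k (a :: s) = rho k a + rhov k s.
Proof. by rewrite /rhov big_cons. Qed.

Lemma rhov_cat s t : rhov k (s ++ t) = rhov k s + rhov k t.
Proof. by rewrite /rhov big_cat. Qed.

Lemma rhov_rcons s a : rhov k (rcons s a) = rhov k s + rho k a.
Proof. by rewrite -cats1 rhov_cat rhov_cons /rhov big_nil addr0. Qed.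

Lemma rhov_nseq n a : rhov k (nseq n a) = n%:R * rho k a.
Proof. by rewrite /rhov big_nseq iter_addr_0 mulr_natl. Qed.

Lemma rhov_nth n v : (size v <= n)%N -> rhov k v = \sum_(i < n) rho k (nth 0%N v i).
Proof.
move=> le_vn; rewrite /rhov (big_nth 0%N) big_mkord.
rewrite (big_ord_widen _ (fun i => rho k (nth 0%N v i)) le_vn) big_mkcond /=.
by apply: eq_bigr => i _; case: ltnP => // le_vi; rewrite nth_default.
Qed.

Lemma rhov_mono w v : vle w v -> rhov k w <= rhov k v.
Proof.
move=> le_wv; rewrite !(@rhov_nth (size w + size v)) ?leq_addr ?leq_addl //.
by apply: ler_sum => i _; apply: rho_mono.
Qed.

Lemma rhov_decr w v j : vle w v -> (nth 0 w j < nth 0 v j)%N ->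
  rhov k w <= rhov k v - rho_step k (nth 0%N v j).-1.
Proof.
move=> le_wv lt_j.
have j_lt_v : (j < size v)%N.
  by case: (ltnP j (size v)) lt_j => // le_vj; rewrite (nth_default _ le_vj).
have j_lt : (j < size w + size v)%N := ltn_addl _ j_lt_v.
have v_j_gt0 : (0 < nth 0 v j)%N := leq_ltn_trans (leq0n _) lt_j.
have lower_j : rho k (nth 0%N v j) - rho_step k (nth 0%N v j).-1 = rho k (nth 0%N v j).-1.
  by rewrite /rho_step prednK //; lra.
rewrite !(@rhov_nth (size w + size v)) ?leq_addr ?leq_addl //.
rewrite (bigD1 (Ordinal j_lt)) // [X in _ <= X - _](bigD1 (Ordinal j_lt)) //= addrAC lower_j.
apply: lerD; first by rewrite rho_mono // -ltnS prednK.
by apply: ler_sum => i _; apply: rho_mono.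
Qed.

Lemma rhov_bump a s : rhov k (a.+1 :: s) = rhov k (a :: s) + rho_step k a.
Proof. by rewrite !rhov_cons /rho_step; lra. Qed.

Lemma rhov_bump_minimal a s w : all (fun y => 0 < y <= a.+1)%N s -> inV w ->
  vlt w (a.+1 :: s) -> rhov k w <= rhov k (a :: s).
Proof.
move=> s_bounded /andP[_ w_pos] lt_w.
have /andP[L_pos L_le] :
    all (fun y => 0 < y)%N (a.+1 :: s) && all (fun y => y <= a.+1)%N (a.+1 :: s).
  by rewrite -all_predI; apply/allP => y /predU1P[->|/(allP s_bounded)] //=; rewrite leqnn.
have [j j_lt lt_j] := vlt_nth w_pos L_pos lt_w.
have le_j : ((nth 0 (a.+1 :: s) j).-1 <= a)%N.
  by have /= := allP L_le _ (mem_nth 0%N j_lt); lia.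
apply: le_trans (rhov_decr lt_w.1 lt_j) _.
by rewrite rhov_bump; have := rho_step_antitone k le_j; lra.
Qed.

Lemma rhov_le_size s : rhov k s <= (size s)%:R * (1 + ratio_ub k).
Proof.
elim: s => [|a s IHs]; first by rewrite /rhov big_nil mul0r.
by rewrite rhov_cons /= -addn1 natrD; have := rho_lt k a; lra.
Qed.

Lemma rhov_lt_size s : s != [::] -> rhov k s < (size s)%:R * (1 + ratio_ub k).
Proof.
case: s => // a s _; rewrite rhov_cons /= -addn1 natrD.
by have := rho_lt k a; have := rhov_le_size s; lra.
Qed.

Lemma rhov_lt_short s : (size s <= k.+2)%N -> rhov k s < x + 4.
Proof.
have := x_ge0 k; have := ratio_ub_gt0 k; have := ratio_ub_le k => r_le r_gt0 x_ge0.
case: (eqVneq s [::]) => [-> _|s_nnil le_s]; first by rewrite /rhov big_nil; lra.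
have : (size s)%:R <= (k + 2)%:R :> rat by rewrite ler_nat addn2.
by rewrite natrD; have := rhov_lt_size s_nnil; nra.
Qed.

Lemma rhov_lt_ones s : size s = k.+1 -> rhov k (s ++ [:: 1%N; 1%N]) < x + 4.
Proof.
move=> size_s; have := ratio_ub_le k.
have s_nnil : s != [::] by rewrite -size_eq0 size_s.
have := rhov_lt_size s_nnil; rewrite size_s -addn1 natrD.
by rewrite rhov_cat !rhov_cons rho1 /rhov big_nil; lra.
Qed.

Lemma rhov_lt_tail s z : size s = k -> (z <= 4)%N ->
  rhov k (s ++ [:: z; 2%N; 1%N]) < x + 4.
Proof.
move=> size_s le_z4; have := rhov_le_size s; have := rho_mono k le_z4.
have := rho_tail_bound k; rewrite size_s.
by rewrite rhov_cat !rhov_cons rho1 /rhov big_nil; lra.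
Qed.

Definition Alist := [:: nseq (k + 4) 1%N; nseq (k + 3) 2%N;
  rcons (nseq (k + 2) 3%N) 1%N; nseq (k + 1) 5%N ++ [:: 2%N; 1%N]].

Definition Blist := [:: nseq (k + 5) 1%N; 2%N :: nseq (k + 3) 1%N; 3%N :: nseq (k + 2) 2%N;
  4%N :: rcons (nseq (k + 1) 3%N) 1%N; 6%N :: nseq k 5%N ++ [:: 2%N; 1%N]].

Lemma Alist_rhov v : v \in Alist -> rhov k v = x + 4.
Proof.
have := x_ge0 k => x_ge0.
rewrite !inE => /or4P[] /eqP->.
- by rewrite rhov_nseq rho1 natrD; lra.
- by rewrite rhov_nseq rho2E natrD; field; rewrite lt0r_neq0 //; lra.
- by rewrite rhov_rcons rhov_nseq rho3E rho1 natrD; field; rewrite lt0r_neq0 //; lra.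
- rewrite rhov_cat rhov_nseq !rhov_cons rho5E rho2E rho1 /rhov big_nil natrD.
  by field; rewrite !lt0r_neq0 //; lra.
Qed.

Lemma Alist_inV v : v \in Alist -> inV v.
Proof.
rewrite !inE => /or4P[] /eqP->.
- by rewrite addnS -[nseq _ _]cats0 inV_block.
- by rewrite addnS -[nseq _ _]cats0 inV_block.
- by rewrite addnS -cats1 inV_block.
- by rewrite addnS inV_block.
Qed.

Lemma Blist_inV L : L \in Blist -> inV L.
Proof.
rewrite !inE => /or4P[| | |/orP[]] /eqP->.
- by rewrite addnS -[nseq _ _]cats0 inV_block.
- by rewrite -[nseq _ _]cats0 inV_block.
- by rewrite -[nseq _ _]cats0 inV_block.
- by rewrite -cats1 inV_block.
- by rewrite inV_block.
Qed.

Lemma Blist_bump L : L \in Blist -> exists a s,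
  [/\ L = a.+1 :: s, rhov k (a :: s) = x + 4 & all (fun y => 0 < y <= a.+1)%N s].
Proof.
have A_rhov := @Alist_rhov.
rewrite !inE => /or4P[| | |/orP[]] /eqP->.
- exists 0%N, (nseq (k + 4) 1%N); split; first by rewrite addnS.
    by rewrite rhov_cons rho0 add0r A_rhov ?mem_head.
  by rewrite all_nseq orbT.
- exists 1%N, (nseq (k + 3) 1%N); split => //; last by rewrite all_nseq orbT.
  by rewrite -(A_rhov (nseq (k + 4) 1%N)) ?mem_head // (addnS k 3).
- exists 2%N, (nseq (k + 2) 2%N); split => //; last by rewrite all_nseq orbT.
  by rewrite -(A_rhov (nseq (k + 3) 2%N)) ?inE ?eqxx ?orbT // (addnS k 2).
- exists 3%N, (rcons (nseq (k + 1) 3%N) 1%N); split => //.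
    by rewrite -(A_rhov (rcons (nseq (k + 2) 3%N) 1%N)) ?inE ?eqxx ?orbT // (addnS k 1).
  by rewrite all_rcons all_nseq orbT.
- exists 5%N, (nseq k 5%N ++ [:: 2%N; 1%N]); split => //.
    by rewrite -(A_rhov (nseq (k + 1) 5%N ++ [:: 2%N; 1%N])) ?inE ?eqxx ?orbT // addn1.
  by rewrite all_cat all_nseq orbT.
Qed.

Lemma Blist_rhov_gt L : L \in Blist -> x + 4 < rhov k L.
Proof.
by case/Blist_bump => a [s [-> rhov_as _]]; rewrite rhov_bump rhov_as ltrDl rho_step_gt0.
Qed.

Lemma Blist_minimal L w : L \in Blist -> inV w -> vlt w L -> rhov k w <= x + 4.
Proof. by case/Blist_bump => a [s [-> <- s_bounded]]; exact: rhov_bump_minimal. Qed.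

Lemma Blist_above_Alist L : L \in Blist -> exists2 A, A \in Alist & vle A L.
Proof.
rewrite !inE => /or4P[| | |/orP[]] /eqP->.
- exists (nseq (k + 4) 1%N); first exact: mem_head.
  by apply: vle_nseq; rewrite ?size_nseq ?leq_add2l // all_nseq orbT.
- exists (nseq (k + 4) 1%N); first exact: mem_head.
  by rewrite (addnS k 3); apply: vle_cons (vle_refl _).
- exists (nseq (k + 3) 2%N); first by rewrite !inE eqxx orbT.
  by rewrite (addnS k 2); apply: vle_cons (vle_refl _).
- exists (rcons (nseq (k + 2) 3%N) 1%N); first by rewrite !inE eqxx !orbT.
  by rewrite (addnS k 1); apply: vle_cons (vle_refl _).
- exists (nseq (k + 1) 5%N ++ [:: 2%N; 1%N]); first by rewrite !inE eqxx !orbT.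
  by rewrite addn1; apply: vle_cons (vle_refl _).
Qed.

Definition classified v :=
  rhov k v < x + 4 \/ v \in Alist \/ exists2 L, L \in Blist & vle L v.

Lemma classify_tail21 s w : inV (rcons s w ++ [:: 2%N; 1%N]) -> size s = k ->
  classified (rcons s w ++ [:: 2%N; 1%N]).
Proof.
move=> /andP[srt _] size_s.
have [le_w4|w_ge5] := leqP w 4; first by left; rewrite cat_rcons rhov_lt_tail.
right; have w_le := sorted_rcons_geq (cat_sorted2 srt).1.
have := @flat_or_bump 5 k _ _ srt (sub_all (fun y => leq_trans w_ge5) w_le).
rewrite size_rcons size_s => /(_ erefl) -[->|bump]; [left | right].
  by rewrite -addn1 !inE eqxx !orbT.
by exists (6%N :: nseq k 5%N ++ [:: 2%N; 1%N]); rewrite ?inE ?eqxx ?orbT.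
Qed.

Lemma classify_tail1 s y : inV (rcons s y ++ [:: 1%N]) -> size s = k.+1 ->
  classified (rcons s y ++ [:: 1%N]).
Proof.
move=> v_inV size_s; have /andP[srt pos] := v_inV.
have y_pos : (0 < y)%N by move: pos; rewrite all_cat all_rcons => /andP[/andP[]].
have [y_ge3|y_le2] := leqP 3 y.
  right; have y_le := sorted_rcons_geq (cat_sorted2 srt).1.
  have := @flat_or_bump 3 k.+1 _ _ srt (sub_all (fun z => leq_trans y_ge3) y_le).
  rewrite size_rcons size_s => /(_ erefl) -[->|bump]; [left | right].
    by rewrite cats1 -addn2 !inE eqxx !orbT.
  by exists (4%N :: rcons (nseq (k + 1) 3%N) 1%N); rewrite ?inE ?eqxx ?orbT // -cats1 addn1.
have [->|y_eq2] : y = 1%N \/ y = 2%N by lia.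
  by left; rewrite cat_rcons rhov_lt_ones.
move: v_inV; rewrite y_eq2; case/lastP: s size_s {srt pos} => [//|s w].
rewrite size_rcons => /eqP; rewrite eqSS => /eqP size_s.
by rewrite cat_rcons => v_inV; apply: classify_tail21.
Qed.

Lemma classify_last s z : inV (rcons s z) -> size s = k.+2 -> classified (rcons s z).
Proof.
move=> v_inV size_s; have /andP[srt pos] := v_inV.
have z_pos : (0 < z)%N by move: pos; rewrite all_rcons => /andP[].
have [z_ge2|z_le1] := leqP 2 z.
  right; have z_le := sorted_rcons_geq srt.
  rewrite -[rcons s z]cats0 in srt *.
  have := @flat_or_bump 2 k.+2 _ _ srt (sub_all (fun y => leq_trans z_ge2) z_le).
  rewrite size_rcons size_s => /(_ erefl) -[->|bump]; [left | right].
    by rewrite cats0 -addn3 !inE eqxx !orbT.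
  exists (3%N :: nseq (k + 2) 2%N); first by rewrite !inE eqxx !orbT.
  by move: bump; rewrite !cats0 addn2.
have z_eq1 : z = 1%N by lia.
move: v_inV; rewrite z_eq1; case/lastP: s size_s {srt pos} => [//|s y].
rewrite size_rcons => /eqP; rewrite eqSS => /eqP size_s.
by rewrite -cats1 => v_inV; apply: classify_tail1.
Qed.

Lemma classify v : inV v -> classified v.
Proof.
move=> v_inV; have /andP[srt pos] := v_inV.
have [le_size|gt_size] := leqP (size v) k.+2; first by left; exact: rhov_lt_short.
have [ge_size|lt_size] := leqP (k + 5) (size v).
  by right; right; exists (nseq (k + 5) 1%N); [exact: mem_head | exact: vle_nseq].
have [size_v|size_v] : size v = k.+4 \/ size v = k.+3 by lia.
  right; rewrite -[v]cats0 in srt *.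
  have := @flat_or_bump 1 k.+3 _ _ srt pos size_v => -[->|bump]; [left | right].
    by rewrite cats0 -addn4 mem_head.
  exists (2%N :: nseq (k + 3) 1%N); first by rewrite !inE eqxx orbT.
  by move: bump; rewrite !cats0 addn3.
move: v_inV; case/lastP: v size_v {srt pos gt_size lt_size} => [//|s z].
by rewrite size_rcons => /eqP; rewrite eqSS => /eqP size_s v_inV; exact: classify_last.
Qed.

End Classification.

Theorem proposition3 (k : nat) :
  (forall v : seq nat, inV v ->
     (rhov k v = (k + 4)%:R <->
      v \in [:: nseq (k + 4) 1%N; nseq (k + 3) 2%N;
                rcons (nseq (k + 2) 3%N) 1%N; nseq (k + 1) 5%N ++ [:: 2%N; 1%N]]))
  /\
  (forall v : seq nat, inV v ->
     ((rhov k v > (k + 4)%:R /\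
       (forall w : seq nat, inV w -> vlt w v -> ~ (rhov k w > (k + 4)%:R))) <->
      v \in [:: nseq (k + 5) 1%N; 2%N :: nseq (k + 3) 1%N; 3%N :: nseq (k + 2) 2%N;
                4%N :: rcons (nseq (k + 1) 3%N) 1%N;
                6%N :: nseq k 5%N ++ [:: 2%N; 1%N]]))
  /\
  (forall w : seq nat, inV w -> rhov k w > (k + 4)%:R ->
     exists v : seq nat, [/\ inV v, vlt v w & rhov k v = (k + 4)%:R]).
Proof.
rewrite natrD; split; [|split].
- move=> v v_inV; split => [rhov_v|/Alist_rhov//].
  case: (classify k v_inV) => [|[//|[L L_B le_Lv]]]; first by rewrite rhov_v ltxx.
  by have := Blist_rhov_gt L_B; have := rhov_mono k le_Lv; lra.
- move=> v v_inV; split => [[gt_v min_v]|v_B].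
  + case: (classify k v_inV) => [|[/Alist_rhov|[L L_B le_Lv]]]; try lra.
    case: (L =P v) => [<- //|neq_Lv]; exfalso.
    exact: min_v L (Blist_inV L_B) (conj le_Lv neq_Lv) (Blist_rhov_gt L_B).
  + split=> [|w w_inV lt_w]; first exact: Blist_rhov_gt.
    by have := Blist_minimal v_B w_inV lt_w; lra.
- move=> w w_inV gt_w.
  case: (classify k w_inV) => [|[/Alist_rhov|[L L_B le_Lw]]]; try lra.
  have [A A_A le_AL] := Blist_above_Alist L_B.
  exists A; split; [exact: Alist_inV A_A | split | exact: Alist_rhov A_A].
    exact: vle_trans le_AL le_Lw.
  by move=> eq_Aw; move: gt_w; rewrite -eq_Aw Alist_rhov //; lra.
Qed.
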